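(* Let $n>p\ge 2$ and consider the linear model $\mathbf{y}=\mathbf{X}\boldsymbol{\beta}+\boldsymbol{\varepsilon}$, where $\mathbf{X}=[\mathbf{x}_1,\dots,\mathbf{x}_p]$ is a known $n\times p$ matrix with linearly independent columns, each column having mean $0$ and Euclidean length $1$, $\boldsymbol{\beta}=(\beta_1,\dots,\beta_p)^T$ is unknown, and $E(\boldsymbol{\varepsilon})=\mathbf{0}$, $\mathrm{var}(\boldsymbol{\varepsilon})=\mathbf{I}$. Suppose there is a constant $r>0$ with $\mathrm{corr}(\mathbf{x}_i,\mathbf{x}_j)=r$ for all $i\ne j$. Let $\hat{\boldsymbol{\beta}}=(\mathbf{X}^T\mathbf{X})^{-1}\mathbf{X}^T\mathbf{y}$, and for $\mathbf{w}$ in the simplex $W=\{\mathbf{w}\in\mathbb{R}^p: w_i\ge0,\ \sum_i w_i=1\}$ write $\mathrm{var}(\hat{\xi}(\mathbf{w}),r)$ for the variance of $\mathbf{w}^T\hat{\boldsymbol{\beta}}$ (which depends only on $p$, $r$ and $\mathbf{w}$). Let $\mathbf{w}_0=(1/p,\dots,1/p)^T$ and $\hat\tau_a=\mathbf{w}_0^T\hat{\boldsymbol\beta}=\frac1p\sum_{i=1}^p\hat\beta_i$, the estimator of the average group effect $\tau_a=\frac1p\sum_{i=1}^p\beta_i$. Then for each fixed $r$, $$\mathrm{var}(\hat{\tau}_a,r)=\mathrm{var}(\hat{\xi}(\mathbf{w}_0),r)=\min_{\mathbf{w}\in W}\mathrm{var}(\hat{\xi}(\mathbf{w}),r).$$ Also,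 $\mathrm{var}(\hat{\tau}_a,r)$, as a function of $r\in(0,1)$, is strictly monotone decreasing with $\lim_{r\to1}\mathrm{var}(\hat{\tau}_a,r)=1/p^2$. Further, among the variances $\mathrm{var}(\hat{\xi}(\mathbf{w}),r)$, $\mathbf{w}\in W$, the variance $\mathrm{var}(\hat{\tau}_a,r)$ is the only one that remains bounded as $r\to1$; i.e., for every fixed $\mathbf{w}\in W$ with $\mathbf{w}\ne\mathbf{w}_0$, $\mathrm{var}(\hat{\xi}(\mathbf{w}),r)$ is unbounded as $r\to 1$.
   Context: The variance of $\mathbf{w}^T\hat{\boldsymbol\beta}$ in this model equals $\mathbf{w}^T(\mathbf{X}^T\mathbf{X})^{-1}\mathbf{w}$, where $\mathbf{X}^T\mathbf{X}$ has $1$ on the diagonal and $r$ off the diagonal; hence it is a function of $p$, $r$ and $\mathbf{w}$ only. *)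

From HB Require Import structures.
From mathcomp Require Import all_boot all_order all_algebra.
From mathcomp Require Import all_classical all_reals all_analysis.
Set Implicit Arguments. Unset Strict Implicit. Unset Printing Implicit Defensive.
Import Order.TTheory GRing.Theory Num.Theory.
Local Open Scope ring_scope.

(* X^T X for the equicorrelated standardized design: 1 on the diagonal,
   r off the diagonal. *)
Definition gram (R : realType) (p : nat) (r : R) : 'M[R]_p :=
  \matrix_(i < p, j < p) (if i == j then 1 else r).

(* var(xi_hat(w), r) = w^T (X^T X)^{-1} w  (var(eps) = I). *)
Definition var_xi (R : realType) (p : nat) (r : R) (w : 'cV[R]_p) : R :=
  (w^T *m invmx (gram p r) *m w) ord0 ord0.

Definition in_simplex (R : realType) (p : nat) (w : 'cV[R]_p) : Prop :=
  (forall i, 0 <= w i ord0) /\ \sum_(i < p) w i ord0 = 1.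

Definition w0 (R : realType) (p : nat) : 'cV[R]_p := const_mx (p%:R)^-1.

Definition var_tau (R : realType) (p : nat) (r : R) : R := var_xi r (w0 R p).

From HB Require Import structures.
From mathcomp Require Import all_boot all_order all_algebra.
From mathcomp Require Import all_classical all_reals all_analysis.
From mathcomp Require Import ring lra.
Import Order.TTheory GRing.Theory Num.Theory.
Import numFieldNormedType.Exports.
Local Open Scope ring_scope.
Local Open Scope classical_set_scope.

(* Write J for the all-ones matrix, so that X^T X = (1 - r) I + r J. Since
   J^2 = p J, its inverse is (1 - r)^-1 (I - r / (1 + (p - 1) r) J). Hence,
   when the weights sum to 1,
     var(xi(w), r) = |w - w0|^2 / (1 - r) + 1 / (p (1 + (p - 1) r)).
   The first term is nonnegative and vanishes only at w0, and it blows up as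
   r -> 1 when w <> w0. The second term is var(tau_a, r), which decreases
   to 1 / p^2. The sample size n does not appear in this formula. *)

Lemma invmx_eq (R : comUnitRingType) (n : nat) (A B : 'M[R]_n) :
  A *m B = 1%:M -> invmx A = B.
Proof.
move=> AB; have [Au _] := mulmx1_unit AB.
by rewrite -[invmx A]mulmx1 -AB mulmxA mulVmx // mul1mx.
Qed.

Lemma div_subr_unbounded_left (R : realFieldType) (x d M : R) : 0 < d ->
  \forall r \near x^'-, M < d / (x - r).
Proof.
move=> d_gt0; have M1_gt0 : 0 < `|M| + 1 by rewrite ltr_wpDl.
near=> r.
have xr_gt0 : 0 < x - r by rewrite subr_gt0; near: r; exact: nbhs_left_lt.
have : x - r < d / (`|M| + 1) by near: r; apply: nbhs_left_ltBl; exact: divr_gt0.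
rewrite ltr_pdivlMr // ltr_pdivlMr //.
have := ler_norm M; have := normr_ge0 M; nra.
Unshelve. all: end_near.
Qed.

Section EquicorrelatedGram.
Variables (R : realType) (p : nat).
Implicit Types (r : R) (v w : 'cV[R]_p).

Local Notation P := (p%:R : R).
Local Notation J := (const_mx 1 : 'M[R]_p).

Definition gram_ones_eig r : R := 1 + (P - 1) * r.

Definition sumsq v : R := \sum_i v i ord0 ^+ 2.

Lemma gramE r : gram p r = (1 - r) *: 1%:M + r *: J.
Proof.
by apply/matrixP=> i j; rewrite !mxE; case: eqP => _ /=; rewrite ?mulr1 ?mulr0; lra.
Qed.

Lemma mul_const1_mx : J *m J = P *: J.
Proof.
apply/matrixP=> i j; rewrite !mxE.
under eq_bigr do rewrite !mxE mulr1.
by rewrite sumr_const card_ord mulr1.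
Qed.

Lemma invmx_gram r : r != 1 -> gram_ones_eig r != 0 ->
  invmx (gram p r) = (1 - r)^-1 *: (1%:M - (r / gram_ones_eig r) *: J).
Proof.
move=> r_neq1 eig_neq0; apply: invmx_eq.
rewrite gramE -scalemxAr mulmxDl !mulmxBr -!scalemxAl -!scalemxAr.
rewrite !mul1mx !mulmx1 mul_const1_mx.
apply/matrixP=> i j; rewrite !mxE.
have oneBr_neq0 : 1 - r != 0 by rewrite subr_eq0 eq_sym.
rewrite /gram_ones_eig in eig_neq0 *.
by case: eqP => _ /=; rewrite ?mulr1n ?mulr0n; field; apply/andP.
Qed.

Lemma mulmx_tr_self v : (v^T *m v) ord0 ord0 = sumsq v.
Proof. by rewrite mxE; apply: eq_bigr => i _; rewrite mxE expr2. Qed.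

Lemma mulmx_tr_const1 v : (v^T *m J *m v) ord0 ord0 = (\sum_i v i ord0) ^+ 2.
Proof.
rewrite mxE expr2 mulr_suml; apply: eq_bigr => i _; rewrite mulrC !mxE.
by congr (_ * _); apply: eq_bigr => k _; rewrite !mxE mulr1.
Qed.

Lemma var_xiE r w : r != 1 -> gram_ones_eig r != 0 ->
  var_xi r w = (sumsq w - r / gram_ones_eig r * (\sum_i w i ord0) ^+ 2) / (1 - r).
Proof.
move=> r_neq1 eig_neq0; rewrite /var_xi invmx_gram //.
rewrite -scalemxAr -scalemxAl mulmxBr mulmx1 -scalemxAr mulmxBl -scalemxAl.
by rewrite mxE mulrC -mulmx_tr_self -mulmx_tr_const1 !mxE.
Qed.

Lemma sumsq_ge0 v : 0 <= sumsq v.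
Proof. by apply: sumr_ge0 => i _; exact: sqr_ge0. Qed.

Lemma sumsq_gt0 v : v != 0 -> 0 < sumsq v.
Proof.
move=> v_neq0; rewrite lt_neqAle sumsq_ge0 andbT eq_sym; apply: contra v_neq0.
move=> /eqP/psumr_eq0P v0; apply/eqP/matrixP => i j; rewrite (ord1 j) mxE.
by apply/eqP; rewrite -sqrf_eq0; apply/eqP/v0 => // k _; exact: sqr_ge0.
Qed.

Hypothesis p_gt0 : (0 < p)%N.

Let P_neq0 : P != 0. Proof. by rewrite pnatr_eq0 -lt0n. Qed.

Lemma w0_in_simplex : in_simplex (w0 R p).
Proof.
split=> [i|]; first by rewrite mxE invr_ge0 ler0n.
under eq_bigr do rewrite mxE.
by rewrite sumr_const card_ord -[_ *+ p]mulr_natr mulVf.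
Qed.

Lemma sumsq_subr_w0 w : \sum_i w i ord0 = 1 -> sumsq (w - w0 R p) = sumsq w - P^-1.
Proof.
move=> w_sum1.
have -> : sumsq (w - w0 R p) = sumsq w - 2 * P^-1 * \sum_i w i ord0 + P * P^-1 ^+ 2.
  have -> : P * P^-1 ^+ 2 = \sum_(i < p) P^-1 ^+ 2.
    by rewrite sumr_const card_ord mulr_natl.
  rewrite /sumsq mulr_sumr -sumrB -big_split /=; apply: eq_bigr => i _; rewrite !mxE; ring.
by rewrite w_sum1; field.
Qed.

Lemma var_xi_sum1 r w : r != 1 -> gram_ones_eig r != 0 -> \sum_i w i ord0 = 1 ->
  var_xi r w = sumsq (w - w0 R p) / (1 - r) + (P * gram_ones_eig r)^-1.
Proof.
move=> r_neq1 eig_neq0 w_sum1; rewrite var_xiE // sumsq_subr_w0 // w_sum1.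
have oneBr_neq0 : 1 - r != 0 by rewrite subr_eq0 eq_sym.
rewrite /gram_ones_eig in eig_neq0 *.
by field; rewrite oneBr_neq0 eig_neq0 P_neq0.
Qed.

Lemma var_tauE r : r != 1 -> gram_ones_eig r != 0 ->
  var_tau p r = (P * gram_ones_eig r)^-1.
Proof.
move=> r_neq1 eig_neq0; rewrite /var_tau var_xi_sum1 //; last exact: w0_in_simplex.2.
by rewrite subrr /sumsq big1 ?mul0r ?add0r // => i _; rewrite mxE expr0n.
Qed.

Lemma gram_ones_eig_gt0 {r} : 0 <= r -> 0 < gram_ones_eig r.
Proof.
move=> r_ge0; have P_ge1 : 1 <= P by rewrite ler1n.
by rewrite /gram_ones_eig; nra.
Qed.

Lemma gram_nondegenerate {r} : 0 <= r -> r < 1 -> r != 1 /\ gram_ones_eig r != 0.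
Proof. by move=> r_ge0 r_lt1; rewrite lt_eqF ?gt_eqF ?gram_ones_eig_gt0. Qed.

Lemma var_tau_le_var_xi r w : 0 <= r < 1 -> \sum_i w i ord0 = 1 ->
  var_tau p r <= var_xi r w.
Proof.
move=> /andP[r_ge0 r_lt1] w_sum1.
have [r_neq1 eig_neq0] := gram_nondegenerate r_ge0 r_lt1.
by rewrite var_tauE // var_xi_sum1 // lerDr divr_ge0 ?sumsq_ge0 // subr_ge0 ltW.
Qed.

Lemma var_tau_decreasing r1 r2 : (1 < p)%N -> 0 <= r1 -> r1 < r2 -> r2 < 1 ->
  var_tau p r2 < var_tau p r1.
Proof.
move=> p_gt1 r1_ge0 r12 r2_lt1.
have r2_ge0 : 0 <= r2 by rewrite (le_trans r1_ge0) ?ltW.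
have [r1_neq1 eig1_neq0] := gram_nondegenerate r1_ge0 (lt_trans r12 r2_lt1).
have [r2_neq1 eig2_neq0] := gram_nondegenerate r2_ge0 r2_lt1.
have P_gt0 : 0 < P by rewrite ltr0n.
rewrite !var_tauE // ltf_pV2 ?posrE ?mulr_gt0 ?gram_ones_eig_gt0 // ltr_pM2l //.
by rewrite ltrD2l ltr_pM2l // subr_gt0 ltr1n.
Qed.

Lemma var_tau_cvg_left1 : var_tau p r @[r --> (1 : R)^'-] --> (P ^+ 2)^-1.
Proof.
have eig1 : gram_ones_eig 1 = P by rewrite /gram_ones_eig mulr1 addrC subrK.
have : (P * gram_ones_eig r)^-1 @[r --> (1 : R)] --> (P * gram_ones_eig 1)^-1.
  apply: cvgV; first by rewrite eig1 mulf_neq0.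
  apply: cvgMl_tmp; rewrite /gram_ones_eig.
  by apply: cvgD; [exact: cvg_cst | apply: cvgMl_tmp; exact: cvg_id].
rewrite eig1 -expr2 => /cvg_at_left_filter.
apply: cvg_trans; apply: near_eq_cvg; near=> r.
have r_ge0 : 0 <= r by near: r; apply: nbhs_left_ge; lra.
have r_lt1 : r < 1 by near: r; exact: nbhs_left_lt.
have [r_neq1 eig_neq0] := gram_nondegenerate r_ge0 r_lt1.
by rewrite var_tauE.
Unshelve. all: end_near.
Qed.

Lemma var_xi_unbounded_left1 w M : \sum_i w i ord0 = 1 -> w != w0 R p ->
  \forall r \near (1 : R)^'-, M < var_xi r w.
Proof.
move=> w_sum1 w_neq_w0.
have d_gt0 : 0 < sumsq (w - w0 R p) by rewrite sumsq_gt0 // subr_eq0.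
near=> r.
have r_ge0 : 0 <= r by near: r; apply: nbhs_left_ge; lra.
have r_lt1 : r < 1 by near: r; exact: nbhs_left_lt.
have [r_neq1 eig_neq0] := gram_nondegenerate r_ge0 r_lt1.
rewrite var_xi_sum1 //; apply: ltr_wpDr.
  by rewrite ltW // invr_gt0 mulr_gt0 ?ltr0n ?gram_ones_eig_gt0.
by near: r; exact: div_subr_unbounded_left.
Unshelve. all: end_near.
Qed.

End EquicorrelatedGram.

Theorem corollary2 (R : realType) (n p : nat) (hnp : (p < n)%N) (hp : (2 <= p)%N) :
  (* minimality of w0 over W, for each fixed r in (0,1) *)
  (forall r : R, 0 < r < 1 ->
     in_simplex (w0 R p) /\
     forall w : 'cV[R]_p, in_simplex w -> var_tau p r <= var_xi r w)
  /\
  (* strictly decreasing in r on (0,1) *)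
  (forall r1 r2 : R, 0 < r1 -> r1 < r2 -> r2 < 1 -> var_tau p r2 < var_tau p r1)
  /\
  (* limit 1/p^2 as r -> 1 *)
  (var_tau p r @[r --> (1:R)^'-] --> (((p%:R : R) ^+ 2)^-1 : R))
  /\
  (* every other w in W gives an unbounded variance as r -> 1 *)
  (forall w : 'cV[R]_p, in_simplex w -> w != w0 R p ->
     ~ (exists M : R, \forall r \near (1:R)^'-, var_xi r w <= M)).
Proof.
have p_gt0 : (0 < p)%N by exact: ltnW.
split; [|split; [|split]].
- move=> r /andP[r_gt0 r_lt1]; split; first exact: w0_in_simplex.
  by move=> w [_ w_sum1]; apply: var_tau_le_var_xi; rewrite ?ltW ?r_lt1.
- by move=> r1 r2 r1_gt0; apply: var_tau_decreasing; rewrite ?ltW.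
- exact: var_tau_cvg_left1.
- move=> w [_ w_sum1] w_neq_w0 [M var_le_M].
  have [r [le_M gt_M]] : exists r : R, var_xi r w <= M /\ M < var_xi r w.
    apply: (filter_ex (F := (1 : R)^'-)); near=> r; split; near: r => //.
    exact: var_xi_unbounded_left1.
  by move: (lt_le_trans gt_M le_M); rewrite ltxx.
Unshelve. all: end_near.
Qed.
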